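(* Let $k$, $(U,Q)$, $f$, $L$, $\beta$ be as below. There is a bijection between the set of $\mathrm{O}(U)(k)$-orbits (under conjugation) on $V_f(k)$ and the set of classes $\alpha\in(L^\times/L^{\times2})_{N=1}$ such that the bilinear form $\langle\,,\rangle_\alpha$ on $L$ is split.
   Context: $k$ is a field of characteristic not $2$; $(U,Q)$ is the split quadratic space over $k$ of dimension $2n+2$ and discriminant $1$, with bilinear form $\langle v,w\rangle=Q(v+w)-Q(v)-Q(w)$; $f\in k[x]$ is monic of degree $2n+2$ with no repeated roots; $V_f(k)$ is the set of $k$-linear operators $T$ on $U$ with $\langle Tv,w\rangle=\langle v,Tw\rangle$ and characteristic polynomial $f$. $L=k[x]/f(x)$ and $\beta$ is the image of $x$. $(L^\times/L^{\times2})_{N=1}$ is the kernel of the norm map $L^\times/L^{\times2}\to k^\times/k^{\times2}$. For $\alpha\in L^\times$, $\langle\lambda,\mu\rangle_\alpha=\mathrm{Tr}_{L/k}(\alpha\lambda\mu/f'(\beta))$ (the coefficient of $\beta^{2n+1}$ in $\alpha\lambda\mu$); whether it is split depends only on the class of $\alpha$ modulo squares. *)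

From HB Require Import structures.
From mathcomp Require Import all_boot all_order all_algebra all_field.
Set Implicit Arguments. Unset Strict Implicit. Unset Printing Implicit Defensive.
Import Order.TTheory GRing.Theory.
Local Open Scope ring_scope.

(* Conventions: U = k^(2n+2) as column vectors 'cV_(n.+1 + n.+1);
   split quadratic form Q(x) = sum_{i<=n} x_i * x_{n+1+i} (hyperbolic). *)

Definition QU (k : fieldType) (n : nat) (v : 'cV[k]_(n.+1 + n.+1)) : k :=
  \sum_(i < n.+1) v (lshift n.+1 i) 0 * v (rshift n.+1 i) 0.

Definition bU (k : fieldType) (n : nat) (v w : 'cV[k]_(n.+1 + n.+1)) : k :=
  QU (v + w) - QU v - QU w.

Definition selfadj (k : fieldType) (n : nat) (T : 'M[k]_(n.+1 + n.+1)) : Prop :=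
  forall v w : 'cV[k]_(n.+1 + n.+1), bU (T *m v) w = bU v (T *m w).

Definition Vf (k : fieldType) (n : nat) (f : {poly k}) (T : 'M[k]_(n.+1 + n.+1)) : Prop :=
  selfadj T /\ char_poly T = f.

Definition OU (k : fieldType) (n : nat) (g : 'M[k]_(n.+1 + n.+1)) : Prop :=
  g \in unitmx /\ forall v, QU (g *m v) = QU v.

Definition orbit_rel (k : fieldType) (n : nat) (T T' : 'M[k]_(n.+1 + n.+1)) : Prop :=
  exists g, OU g /\ T' = g *m T *m invmx g.

(* Elements of L = k[x]/f are represented by polynomials; alpha is a unit of L
   iff coprimep alpha f.  Two units have the same class in L^x/L^x2 iff
   alpha' = alpha * lambda^2 in L for some unit lambda. *)
Definition sqclass_rel (k : fieldType) (f a a' : {poly k}) : Prop :=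
  exists l : {poly k}, coprimep l f /\ f %| (a' - a * l ^+ 2).

(* N_{L/k}(alpha) = det of multiplication by alpha in the basis 1, beta, ..., beta^(2n+1) *)
Definition normL (k : fieldType) (n : nat) (f a : {poly k}) : k :=
  \det (\matrix_(i < n.+1 + n.+1, j < n.+1 + n.+1) ((a * 'X^j) %% f)`_i).

(* class of alpha lies in the kernel of the norm L^x/L^x2 -> k^x/k^x2 *)
Definition norm_sq (k : fieldType) (n : nat) (f a : {poly k}) : Prop :=
  exists c : k, normL n f a = c ^+ 2.

(* element of L with coordinates x in the basis 1, beta, ..., beta^(2n+1) *)
Definition poly_of (k : fieldType) (n : nat) (x : 'cV[k]_(n.+1 + n.+1)) : {poly k} :=
  \sum_(i < n.+1 + n.+1) x i 0 *: 'X^i.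

(* <lambda, mu>_alpha = coefficient of beta^(2n+1) in alpha*lambda*mu *)
Definition bL (k : fieldType) (n : nat) (f a : {poly k}) (x y : 'cV[k]_(n.+1 + n.+1)) : k :=
  ((a * poly_of x * poly_of y) %% f)`_(n + n).+1.

(* <,>_alpha is split: (L, <,>_alpha) is isometric to the split space (U, <,>) *)
Definition split_form (k : fieldType) (n : nat) (f a : {poly k}) : Prop :=
  exists phi : 'M[k]_(n.+1 + n.+1), phi \in unitmx /\
    forall u v, bL f a (phi *m u) (phi *m v) = bU u v.

Arguments Vf {k} n f T.

From HB Require Import structures.
From mathcomp Require Import all_boot all_order all_algebra all_field.
From mathcomp Require Import ring zify.
From Stdlib Require Import Classical ClassicalEpsilon.
Set Implicit Arguments. Unset Strict Implicit. Unset Printing Implicit Defensive.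
Import GRing.Theory.
Local Open Scope ring_scope.

(* For [T] in [V_f(k)] the separability of [f] gives a cyclic vector [v], so [p |-> p(T) v]
   identifies [L] with [U] and pulls [<,>] back to [<,>_a] for some [a].  Replacing [v] by
   another cyclic vector [l(T) v] multiplies [a] by [l^2], so the square class of [a] is an
   invariant of the O(U)-orbit of [T].  Nondegeneracy of [<,>] makes [a] a unit, [<,>_a] is
   split by construction, and comparing Gram determinants shows that [N(a)] is a square.
   Conversely, two operators with the same invariant are conjugate by the isometry matching
   their cyclic bases, and a split [<,>_a] transports multiplication by [beta] to an
   operator in [V_f(k)]. *)

(** * Matrices and polynomials *)

Section MatrixFacts.
Variable k : fieldType.

Lemma nonunitmx_ker m (A : 'M[k]_m) :
  A \notin unitmx -> exists2 v : 'cV_m, v != 0 & A *m v = 0.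
Proof.
move=> nuA; have /det0P[v nz_v vA0] : \det A^T == 0.
  by rewrite det_tr; apply: contraNT nuA; rewrite unitmxE unitfE.
exists v^T; first by rewrite trmx_eq0.
by rewrite -[A]trmxK -trmx_mul vA0 trmx0.
Qed.

Lemma unitmx_ker m (A : 'M[k]_m) :
  (forall v : 'cV_m, A *m v = 0 -> v = 0) -> A \in unitmx.
Proof.
move=> ker0; apply: contraT => /nonunitmx_ker[v nz_v /ker0 v0].
by rewrite v0 eqxx in nz_v.
Qed.

Lemma mulmx_ext m (A B : 'M[k]_m) : (forall u : 'cV_m, A *m u = B *m u) -> A = B.
Proof.
move=> eqAB; apply/matrixP => i j.
by have /colP/(_ i) := eqAB (delta_mx j 0); rewrite -!colE !mxE.
Qed.

Lemma form_mx_ext m (A B : 'M[k]_m) :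
  (forall u w : 'cV_m, (u^T *m A *m w) 0 0 = (u^T *m B *m w) 0 0) -> A = B.
Proof.
move=> eqAB; apply/matrixP => i j.
by move: (eqAB (delta_mx i 0) (delta_mx j 0)); rewrite trmx_delta -!rowE -!colE !mxE.
Qed.

Lemma char_poly_tr m (A : 'M[k]_m) : char_poly A^T = char_poly A.
Proof.
rewrite /char_poly -det_tr; congr (\det _).
by rewrite /char_poly_mx linearB /= tr_scalar_mx map_trmx trmxK.
Qed.

Lemma char_poly_uconj m (P A : 'M[k]_m) :
  P \in unitmx -> char_poly (invmx P *m A *m P) = char_poly A.
Proof.
move=> Pu; rewrite /char_poly; have -> : char_poly_mx (invmx P *m A *m P) =
    map_mx polyC (invmx P) *m char_poly_mx A *m map_mx polyC P.
  rewrite /char_poly_mx mulmxBr mulmxBl -!map_mxM; congr (_ - _).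
  by rewrite scalar_mxC -mulmxA -map_mxM mulVmx // map_mx1 mulmx1.
rewrite !det_mulmx !det_map_mx mulrC mulrA -rmorphM /= -det_mulmx mulmxV //.
by rewrite det1 rmorph1 mul1r.
Qed.

Lemma char_poly_castmx m m' (e : m = m') (A : 'M[k]_m) :
  char_poly (castmx (e, e) A) = char_poly A.
Proof. by case: m' / e; rewrite castmx_id. Qed.

Lemma horner_mx_uconj_mul m (P T : 'M[k]_m.+1) p (x : 'cV_m.+1) : P \in unitmx ->
  horner_mx (P *m T *m invmx P) p *m (P *m x) = P *m (horner_mx T p *m x).
Proof. by move=> Pu; rewrite horner_mx_uconj // !mulmxA mulmxKV. Qed.

Lemma horner_mx_sum m (T : 'M[k]_m.+1) (g : {poly k}) :
  horner_mx T g = \sum_(i < size g) g`_i *: T ^+ i.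
Proof.
rewrite -{1}[g]coefK poly_def linear_sum /=; apply: eq_bigr => i _.
by rewrite horner_mxZ rmorphXn /= horner_mx_X.
Qed.

(* ['X - T] divides [g(X) - g(T)] in the matrix ring over [{poly k}]; take determinants. *)
Lemma char_poly_dvd_exp m (T : 'M[k]_m.+1) (g : {poly k}) :
  horner_mx T g = 0 -> char_poly T %| g ^+ m.+1.
Proof.
move=> gT0.
pose X : 'M[{poly k}]_m.+1 := ('X : {poly k})%:M.
pose A : 'M[{poly k}]_m.+1 := map_mx polyC T.
have cXA : GRing.comm X A by rewrite /GRing.comm /X -!mulmxE scalar_mxC.
have gX : g%:M = \sum_(i < size g) (g`_i)%:P *: X ^+ i :> 'M[{poly k}]_m.+1.
  rewrite -{1}[g]coefK poly_def raddf_sum /=; apply: eq_bigr => i _.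
  rewrite /X -mul_polyC -scale_scalar_mx; congr (_ *: _).
  by elim: (i : nat) => [|j IH]; rewrite ?expr0 // !exprS scalar_mxM IH mulmxE.
have gA : 0 = \sum_(i < size g) (g`_i)%:P *: A ^+ i :> 'M[{poly k}]_m.+1.
  transitivity (map_mx polyC (horner_mx T g)); first by rewrite gT0 map_mx0.
  rewrite horner_mx_sum raddf_sum /=; apply: eq_bigr => i _.
  by rewrite map_mxZ rmorphXn.
have -> : g ^+ m.+1 = \det (g%:M : 'M[{poly k}]_m.+1) by rewrite det_scalar.
rewrite -[g%:M]subr0 [X in _ - X]gA gX -sumrB.
rewrite (eq_bigr (fun i : 'I_(size g) => (X - A) *
    ((g`_i)%:P *: \sum_(j < i) X ^+ (i.-1 - j) * A ^+ j))) => [|i _]; last first.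
  by rewrite -scalerBr (subrXX_comm _ cXA) scalerAr.
by rewrite -mulr_sumr -mulmxE det_mulmx dvdp_mulr.
Qed.

End MatrixFacts.

Lemma modp_sum (k : fieldType) (d : {poly k}) I (r : seq I) (P : pred I) F :
  (\sum_(i <- r | P i) F i) %% d = \sum_(i <- r | P i) (F i %% d).
Proof. by elim/big_rec2: _ => [|i x y _ <-]; rewrite ?mod0p ?modpD. Qed.

Lemma separable_dvd_exp (k : fieldType) (f g : {poly k}) e :
  separable_poly f -> f %| g ^+ e -> f %| g.
Proof.
move=> sep_f dvd_f.
set h := gcdp f g; set q := f %/ h.
have Df : f = q * h by rewrite divpK // dvdp_gcdl.
have cop_qg : coprimep q g.
  have cop_qh : coprimep q h by apply: (separable_coprime sep_f); rewrite -Df.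
  apply/coprimepP => d d_q d_g; apply: (coprimepP _ _ cop_qh) => //.
  by rewrite dvdp_gcd d_g (dvdp_trans d_q) // Df dvdp_mulr.
have : coprimep q q.
  apply: (coprimep_dvdl _ (coprimep_expr e cop_qg)).
  by apply: dvdp_trans dvd_f; rewrite Df dvdp_mulr.
rewrite coprimepp => /size_poly1P[c nz_c Dq].
by rewrite Df Dq mul_polyC dvdpZl // dvdp_gcdr.
Qed.

(** * Cyclic vectors *)

Lemma reducible_poly_split (k : fieldType) (d : {poly k}) :
  (1 < size d)%N -> ~ irreducible_poly d ->
  exists d1 d2, [/\ d = d1 * d2, (size d1 < size d)%N & (size d2 < size d)%N].
Proof.
move=> d_gt1 red_d.
have [q [q_n1 q_d q_ndvd]] : exists q : {poly k}, [/\ size q != 1%N, q %| d & ~~ (q %= d)].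
  apply: NNPP => nq; apply: red_d; split => // q q_n1 q_d.
  by apply: NNPP => nqd; apply: nq; exists q; split => //; apply/negP.
have nz_d : d != 0 by rewrite -size_poly_gt0 ltnW.
have nz_q : q != 0 by apply: contraNneq nz_d => q0; rewrite -dvd0p -q0.
exists (d %/ q), q; split; first by rewrite divpK.
  rewrite size_divp // ltn_subrL (ltnW d_gt1) andbT -subn1 subn_gt0.
  by rewrite ltn_neqAle eq_sym q_n1 size_poly_gt0.
by rewrite ltn_neqAle dvdp_leq // andbT dvdp_size_eqp.
Qed.

Definition mx_annihilator (k : fieldType) m (T : 'M[k]_m.+1) (v : 'cV_m.+1) d :=
  forall q, (horner_mx T q *m v == 0) = (d %| q).

Section CyclicVector.
Variables (k : fieldType) (m : nat) (T : 'M[k]_m.+1).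
Local Notation hT := (horner_mx T).
Local Notation chi := (char_poly T).

Lemma horner_mxM_mulmx p q (v : 'cV_m.+1) : hT (p * q) *m v = hT p *m (hT q *m v).
Proof. by rewrite rmorphM /= -mulmxE mulmxA. Qed.

Lemma mx_annihilator_mul_coprime d1 d2 v1 v2 : coprimep d1 d2 ->
  mx_annihilator T v1 d1 -> mx_annihilator T v2 d2 ->
  mx_annihilator T (v1 + v2) (d1 * d2).
Proof.
move=> cop12 ann1 ann2 q; rewrite Gauss_dvdp //.
have part d d' w w' : coprimep d d' -> mx_annihilator T w d ->
    mx_annihilator T w' d' -> hT q *m (w + w') = 0 -> d %| q.
  move=> cop ann ann' qw0; rewrite -(Gauss_dvdpr _ cop) -ann; apply/eqP.
  have /eqP w'0 : hT d' *m w' == 0 by rewrite ann'.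
  have : hT (d' * q) *m (w + w') = 0 by rewrite horner_mxM_mulmx qw0 mulmx0.
  by rewrite mulmxDr (mulrC d' q) [hT (q * d') *m w']horner_mxM_mulmx w'0 mulmx0 addr0.
apply/eqP/andP => [q0|[q1 q2]].
  split; first exact: part ann1 ann2 q0.
  by apply: (part _ _ v2 v1 _ ann2 ann1); rewrite 1?coprimep_sym // addrC.
by move: (ann1 q) (ann2 q); rewrite q1 q2 mulmxDr => /eqP -> /eqP ->; rewrite addr0.
Qed.

Lemma mx_annihilator_uconj P v d : P \in unitmx ->
  mx_annihilator T v d -> mx_annihilator (P *m T *m invmx P) (P *m v) d.
Proof.
move=> Pu ann q; rewrite horner_mx_uconj_mul // -ann.
by rewrite -{1}(mulmx0 _ P) (can_eq (mulKmx Pu)).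
Qed.

Hypothesis sep_chi : separable_poly chi.

Lemma irreducible_char_ker d : irreducible_poly d -> d %| chi ->
  exists2 v : 'cV_m.+1, v != 0 & hT d *m v = 0.
Proof.
move=> [d_gt1 _] d_chi; apply/nonunitmx_ker; apply/negP => dTu.
have nz_chi : chi != 0 by rewrite -size_poly_eq0 size_char_poly.
have Dchi : chi = chi %/ d * d by rewrite divpK.
have nz_d : d != 0 by rewrite -size_poly_gt0 ltnW.
have qT0 : hT (chi %/ d) = 0.
  have := Cayley_Hamilton T; rewrite {1}Dchi rmorphM /= -mulmxE.
  by move/(congr1 (mulmx^~ (invmx (hT d)))); rewrite mulmxK // mul0mx.
have nz_q : chi %/ d != 0 by apply: contraNneq nz_chi => q0; rewrite Dchi q0 mul0r.
have := dvdp_leq nz_q (separable_dvd_exp sep_chi (char_poly_dvd_exp qT0)).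
by rewrite size_divp // size_char_poly; lia.
Qed.

Lemma mx_annihilator_irreducible d : irreducible_poly d -> d %| chi ->
  exists v, mx_annihilator T v d.
Proof.
move=> irr_d d_chi; have [v nz_v dv0] := irreducible_char_ker irr_d d_chi.
exists v => q; apply/eqP/idP => [qv0|/divpK <-]; last first.
  by rewrite horner_mxM_mulmx dv0 mulmx0.
apply: contraNT nz_v; rewrite -irreducible_poly_coprime // => /Bezout_eq1_coprimepP[[u w] /= Duw].
rewrite -[v]mul1mx -(horner_mx_C T 1) polyC1 -Duw rmorphD /= mulmxDl.
by rewrite !horner_mxM_mulmx qv0 dv0 !mulmx0 addr0.
Qed.

Lemma mx_annihilator_dvd d : d %| chi -> exists v, mx_annihilator T v d.
Proof.
have [s] := ubnP (size d); elim: s d => // s IH d /ltnSE d_le d_chi.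
have nz_d : d != 0 by apply: contraTneq d_chi => ->; rewrite dvd0p -size_poly_eq0 size_char_poly.
have [d_le1|d_gt1] := leqP (size d) 1.
  exists 0 => q; rewrite mulmx0 eqxx; apply/esym.
  have Dd := size1_polyC d_le1.
  by rewrite Dd -[_%:P]mulr1 mul_polyC dvdpZl ?dvd1p // -polyC_eq0 -Dd.
case: (classic (irreducible_poly d)) => [irr_d|red_d]; first exact: mx_annihilator_irreducible.
have [d1 [d2 [Dd lt_d1 lt_d2]]] := reducible_poly_split d_gt1 red_d.
rewrite Dd in d_chi.
have [v1 ann1] := IH d1 (leq_trans lt_d1 d_le) (dvdp_trans (dvdp_mulIl d1 d2) d_chi).
have [v2 ann2] := IH d2 (leq_trans lt_d2 d_le) (dvdp_trans (dvdp_mulIr d1 d2) d_chi).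
exists (v1 + v2); rewrite Dd; apply: mx_annihilator_mul_coprime => //.
exact: separable_coprime sep_chi d_chi.
Qed.

End CyclicVector.

(** * The split quadratic space *)

Section SplitForm.
Variables (k : fieldType) (n : nat).
Local Notation N := (n.+1 + n.+1)%N.
Implicit Types (u v w : 'cV[k]_N).

Definition hyp_mx : 'M[k]_N := block_mx 0 1%:M 1%:M 0.

Lemma bU_mx v w : bU v w = (v^T *m hyp_mx *m w) 0 0.
Proof.
rewrite /bU /QU -!sumrB -[v in RHS]vsubmxK -[w in RHS]vsubmxK tr_col_mx.
rewrite /hyp_mx mul_row_block !mulmx0 !mulmx1 !add0r !addr0 mul_row_col !mxE.
by rewrite -big_split /=; apply: eq_bigr => i _; rewrite !mxE; ring.
Qed.

Lemma hyp_mx_invol : hyp_mx *m hyp_mx = 1%:M.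
Proof.
rewrite /hyp_mx mulmx_block !mulmx0 !mul0mx !mulmx1 !add0r !addr0.
by rewrite -scalar_mx_block.
Qed.

Lemma bU_sym v w : bU v w = bU w v.
Proof. by rewrite /bU [v + w]addrC; ring. Qed.

Lemma bUDr v w1 w2 : bU v (w1 + w2) = bU v w1 + bU v w2.
Proof. by rewrite !bU_mx mulmxDr mxE. Qed.

Lemma bUZr v c w : bU v (c *: w) = c * bU v w.
Proof. by rewrite !bU_mx -scalemxAr mxE. Qed.

Lemma bU0r v : bU v 0 = 0.
Proof. by rewrite bU_mx mulmx0 mxE. Qed.

Lemma bUDl v1 v2 w : bU (v1 + v2) w = bU v1 w + bU v2 w.
Proof. by rewrite ![bU _ w]bU_sym bUDr. Qed.

Lemma bUZl c v w : bU (c *: v) w = c * bU v w.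
Proof. by rewrite ![bU _ w]bU_sym bUZr. Qed.

Lemma bU0l v : bU 0 v = 0.
Proof. by rewrite bU_sym bU0r. Qed.

Lemma bU_sumr v I (r : seq I) (P : pred I) (F : I -> 'cV[k]_N) :
  bU v (\sum_(i <- r | P i) F i) = \sum_(i <- r | P i) bU v (F i).
Proof. by elim/big_rec2: _ => [|i x y _ <-]; rewrite ?bU0r ?bUDr. Qed.

Lemma bU_diag v : bU v v = 2%:R * QU v.
Proof. by rewrite /bU /QU -!sumrB mulr_sumr; apply: eq_bigr => i _; rewrite !mxE; ring. Qed.

Lemma bU_nondeg w : (forall u, bU w u = 0) -> w = 0.
Proof.
move=> w_perp; have wJ0 : w^T *m hyp_mx = 0.
  apply/rowP => j; rewrite [RHS]mxE.
  by have := w_perp (delta_mx j 0); rewrite bU_mx -colE mxE.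
apply: trmx_inj; rewrite trmx0 -[w^T]mulmx1 -hyp_mx_invol.
by rewrite mulmxA wJ0 mul0mx.
Qed.

Lemma bU_OU g v w : OU g -> bU (g *m v) (g *m w) = bU v w.
Proof. by case=> _ gQ; rewrite /bU -mulmxDr !gQ. Qed.

Lemma selfadj_horner_mx T : selfadj T ->
  forall p v w, bU (horner_mx T p *m v) w = bU v (horner_mx T p *m w).
Proof.
move=> sa_T; elim/poly_ind => [|p c IH] v w.
  by rewrite rmorph0 !mul0mx bU0l bU0r.
have cT : T *m horner_mx T p = horner_mx T p *m T by apply: comm_mx_horner.
rewrite rmorphD rmorphM /= horner_mx_X horner_mx_C -!mulmxE !mulmxDl.
by rewrite !mul_scalar_mx bUDl bUDr bUZl bUZr -!mulmxA IH sa_T !mulmxA cT.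
Qed.

End SplitForm.

(** * The algebra [L = k[x]/(f)] *)

Definition antidiag_mx (k : fieldType) m : 'M[k]_m :=
  \matrix_(i, j) ((i + j)%N == m.-1)%:R.

Section QuotientAlgebra.
Variables (k : fieldType) (n : nat) (f : {poly k}).
Hypothesis size_f : size f = (n.+1 + n.+1).+1.
Local Notation N := (n.+1 + n.+1)%N.
Implicit Types (a p q r : {poly k}) (x y : 'cV[k]_N).

(* In the paper's notation, [trL p] is [Tr_{L/k}(p(beta) / f'(beta))]. *)
Definition trL p : k := (p %% f)`_(n + n).+1.

Definition col_poly p : 'cV[k]_N := \col_(i < N) p`_i.

Definition mulL a : 'M[k]_N := \matrix_(i < N, j < N) ((a * 'X^j) %% f)`_i.

Definition gramL a : 'M[k]_N := \matrix_(i < N, j < N) trL (a * 'X^i * 'X^j).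

Lemma nz_f : f != 0.
Proof. by rewrite -size_poly_eq0 size_f. Qed.

Lemma size_modpf p : (size (p %% f)%R <= N)%N.
Proof. by rewrite -ltnS -size_f ltn_modp nz_f. Qed.

Lemma poly_ofE x : poly_of x = \poly_(i < N) x (inord i) 0.
Proof. by rewrite poly_def /poly_of; apply: eq_bigr => i _; rewrite inord_val. Qed.

Lemma size_poly_of x : (size (poly_of x) <= N)%N.
Proof. by rewrite poly_ofE size_poly. Qed.

Lemma col_polyK p : (size p <= N)%N -> poly_of (col_poly p) = p.
Proof.
move=> p_le; rewrite poly_ofE; apply/polyP => i; rewrite coef_poly.
case: ifP => lt_iN; first by rewrite mxE inordK.
by rewrite nth_default // (leq_trans p_le) // leqNgt lt_iN.
Qed.

Lemma poly_of_eq0 x : poly_of x = 0 -> x = 0.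
Proof.
move=> /(congr1 (fun p => p`_ _)) x0; apply/colP => i; rewrite mxE.
by have := x0 i; rewrite poly_ofE coef_poly ltn_ord inord_val coef0.
Qed.

Lemma poly_of0 : poly_of (0 : 'cV[k]_N) = 0.
Proof. by rewrite /poly_of big1 // => i _; rewrite mxE scale0r. Qed.

Lemma poly_ofD x y : poly_of (x + y) = poly_of x + poly_of y.
Proof. by rewrite /poly_of -big_split; apply: eq_bigr => i _; rewrite mxE scalerDl. Qed.

Lemma poly_ofZ c x : poly_of (c *: x) = c *: poly_of x.
Proof. by rewrite /poly_of scaler_sumr; apply: eq_bigr => i _; rewrite mxE scalerA. Qed.

Lemma trLD p q : trL (p + q) = trL p + trL q.
Proof. by rewrite /trL modpD coefD. Qed.

Lemma trLZ c p : trL (c *: p) = c * trL p.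
Proof. by rewrite /trL modpZl coefZ. Qed.

Lemma trL_sum I (s : seq I) (P : pred I) (F : I -> {poly k}) :
  trL (\sum_(i <- s | P i) F i) = \sum_(i <- s | P i) trL (F i).
Proof. by elim/big_rec2: _ => [|i x y _ <-]; rewrite ?trLD // /trL mod0p coef0. Qed.

Lemma trL_modpMr p q : trL (p * (q %% f)) = trL (p * q).
Proof. by rewrite /trL modp_mul. Qed.

Lemma trL_modpMl p q : trL (p %% f * q) = trL (p * q).
Proof. by rewrite mulrC trL_modpMr mulrC. Qed.

Lemma trL_dvdMl p q : f %| p -> trL (p * q) = 0.
Proof. by move=> f_p; rewrite /trL modp_eq0 ?coef0 ?dvdp_mulr. Qed.

Lemma trL_eqmodMl p q r : f %| p - q -> trL (p * r) = trL (q * r).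
Proof. by move=> f_pq; rewrite -[p](subrK q) mulrDl trLD trL_dvdMl ?add0r. Qed.

Lemma trL_poly_ofMl x q : trL (poly_of x * q) = \sum_(i < N) x i 0 * trL ('X^i * q).
Proof. by rewrite /poly_of mulr_suml trL_sum; apply: eq_bigr => i _; rewrite -scalerAl trLZ. Qed.

(* For [r != 0] of degree [d < N], the product [r * 'X^(N.-1 - d)] has top coefficient
   [lead_coef r]. *)
Lemma trL_nondeg r : (size r <= N)%N -> (forall j : 'I_N, trL (r * 'X^j) = 0) -> r = 0.
Proof.
move=> r_le r_perp; apply: contraTeq isT => nz_r.
have r_gt0 : (0 < size r)%N by rewrite size_poly_gt0.
have lt_jN : (N - size r < N)%N by lia.
move: (r_perp (Ordinal lt_jN)); rewrite /trL /= modp_small; last first.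
  by rewrite size_mulXn // size_f subnK.
rewrite coefMXn ifF; last by move: (size r) r_gt0 => s; lia.
have -> : ((n + n).+1 - (N - size r))%N = (size r).-1.
  by move: (size r) r_le r_gt0 => s; lia.
by move/eqP; rewrite -lead_coefE lead_coef_eq0 (negPf nz_r).
Qed.

Lemma trL_eqmod a b : (forall j : 'I_N, trL (a * 'X^j) = trL (b * 'X^j)) -> f %| a - b.
Proof.
move=> eq_ab; apply/modp_eq0P; apply: trL_nondeg => [|j]; first exact: size_modpf.
by rewrite trL_modpMl mulrBl /trL modpD modpN coefD coefN -!/(trL _) eq_ab subrr.
Qed.

Lemma poly_of_mulL a x : poly_of (mulL a *m x) = (a * poly_of x) %% f.
Proof.
apply/polyP => i; rewrite poly_ofE coef_poly; case: ifP => lt_iN; last first.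
  by rewrite nth_default // (leq_trans (size_modpf _)) // leqNgt lt_iN.
rewrite mxE /poly_of mulr_sumr modp_sum coef_sum; apply: eq_bigr => j _.
by rewrite !mxE inordK // -scalerAr modpZl coefZ mulrC.
Qed.

Lemma bL_gramL a x y : bL f a x y = (x^T *m gramL a *m y) 0 0.
Proof.
rewrite mxE; under eq_bigr do rewrite mxE mulr_suml.
rewrite exchange_big /=; change (bL f a x y) with (trL (a * poly_of x * poly_of y)).
have -> : a * poly_of x * poly_of y = poly_of x * (poly_of y * a) by ring.
rewrite trL_poly_ofMl; apply: eq_bigr => i _.
have -> : 'X^i * (poly_of y * a) = poly_of y * (a * 'X^i) by ring.
rewrite trL_poly_ofMl mulr_sumr; apply: eq_bigr => j _.
by rewrite !mxE [_ * 'X^j]mulrC -mulrA [y j 0 * _]mulrC.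
Qed.

Lemma bL_mulL_sym a b x y : bL f a (mulL b *m x) y = bL f a x (mulL b *m y).
Proof.
change (trL (a * poly_of (mulL b *m x) * poly_of y) = trL (a * poly_of x * poly_of (mulL b *m y))).
by rewrite !poly_of_mulL trL_modpMr mulrAC trL_modpMr; congr trL; ring.
Qed.

Lemma gramL_mulL a : gramL a = (mulL a)^T *m gramL 1.
Proof.
apply/matrixP => i j; rewrite !mxE.
rewrite (eq_bigr (fun l => col_poly ((a * 'X^i) %% f) l 0 * trL ('X^l * 'X^j))); last first.
  by move=> l _; rewrite !mxE mul1r.
by rewrite -trL_poly_ofMl col_polyK ?size_modpf // trL_modpMl.
Qed.

Lemma gramL1_mulmx c (j : 'I_N) : (gramL 1 *m c) j 0 = trL (poly_of c * 'X^j).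
Proof.
rewrite mxE trL_poly_ofMl; apply: eq_bigr => i _.
by rewrite mxE mul1r mulrC; congr (_ * trL _); rewrite mulrC.
Qed.

Lemma antidiag_block :
  antidiag_mx k N = hyp_mx k n *m block_mx (antidiag_mx k n.+1) 0 0 (antidiag_mx k n.+1).
Proof.
rewrite /hyp_mx mulmx_block !mul0mx !mulmx0 !mul1mx !add0r !addr0.
rewrite -[antidiag_mx k N]submxK; congr block_mx; apply/matrixP => i j; rewrite !mxE /=.
- by case: eqP => // ij; move: ij (ltn_ord i) (ltn_ord j); lia.
- by congr (_ %:R); apply/eqP/eqP; lia.
- by congr (_ %:R); apply/eqP/eqP; lia.
- by case: eqP => // ij; move: ij; lia.
Qed.

Lemma gramL1_lt (i j : 'I_N) : (i + j < N)%N -> gramL 1 i j = ((i + j)%N == N.-1)%:R.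
Proof.
move=> lt_ijN; rewrite mxE /trL mul1r -exprD modp_small; last first.
  by rewrite size_polyXn size_f ltnS.
by rewrite coefXn; congr (_ %:R); apply/eqP/eqP; lia.
Qed.

(* [antidiag_mx N *m gramL 1] reverses the rows of the Hankel matrix [gramL 1],
   making it upper unitriangular. *)
Lemma det_antidiag_gramL1 : \det (antidiag_mx k N) * \det (gramL 1) = 1.
Proof.
have rev_rows i j : (antidiag_mx k N *m gramL 1) i j = gramL 1 (rev_ord i) j.
  rewrite mxE (bigD1 (rev_ord i)) //= big1 => [|l ne_li].
    have -> : antidiag_mx k N i (rev_ord i) = 1.
      by rewrite mxE (_ : _ == _) //; apply/eqP; move: (ltn_ord i) => /=; lia.
    by rewrite mul1r addr0.
  rewrite mxE (_ : _ == _ = false) ?mul0r //; apply: contraNF ne_li => /eqP ij.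
  by apply/eqP/val_inj => /=; move: ij (ltn_ord i); lia.
rewrite -det_mulmx -det_tr det_trig.
  apply: big1 => i _; rewrite mxE rev_rows gramL1_lt /=; last by move: (ltn_ord i); lia.
  by case: eqP => // ne; exfalso; apply: ne; move: (ltn_ord i); lia.
apply/is_trig_mxP => i j lt_ij; rewrite mxE rev_rows gramL1_lt /=; last first.
  by move: (ltn_ord j) lt_ij; lia.
by case: eqP => // eq_ij; move: (ltn_ord j) lt_ij eq_ij; lia.
Qed.

Lemma unitmx_gramL1 : gramL 1 \in unitmx.
Proof.
rewrite unitmxE unitfE; apply: contra_eq_neq det_antidiag_gramL1 => ->.
by rewrite mulr0 eq_sym oner_eq0.
Qed.

(* Compare Gram determinants: [\det (gramL a) = N(a) * \det (gramL 1)] with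
   [\det (gramL 1) = \det hyp_mx] up to squares. *)
Lemma split_form_norm_sq a : split_form n f a -> norm_sq n f a.
Proof.
case=> phi [phi_u phi_iso].
have gram_phi : phi^T *m gramL a *m phi = hyp_mx k n.
  apply: form_mx_ext => u w.
  by rewrite -bU_mx -phi_iso bL_gramL trmx_mul !mulmxA.
have /(congr1 determinant) := gram_phi.
rewrite !det_mulmx det_tr gramL_mulL det_mulmx det_tr => det_gram.
have nz_phi : \det phi != 0 by rewrite -unitfE -unitmxE.
have detJ2 : \det (hyp_mx k n) ^+ 2 = 1.
  by rewrite expr2 -det_mulmx hyp_mx_invol det1.
exists (\det (antidiag_mx k n.+1) / \det phi).
apply: (mulfI (expf_neq0 2 nz_phi)); rewrite /normL -/(mulL a) -[LHS]mulr1.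
rewrite -det_antidiag_gramL1 antidiag_block det_mulmx det_ublock.
transitivity (\det (hyp_mx k n) * (\det phi * (\det (mulL a) * \det (gramL 1)) * \det phi)
  * \det (antidiag_mx k n.+1) ^+ 2); first by ring.
by rewrite det_gram -expr2 detJ2 mul1r; field.
Qed.

Lemma XN_modp : f \is monic -> 'X^N %% f = 'X^N - f.
Proof.
move=> monic_f; have size_Xf : (size ('X^N - f)%R <= N)%N.
  apply/leq_sizeP => j le_Nj; rewrite coefB coefXn.
  case: eqP => [->|ne_jN]; last by rewrite nth_default ?subrr // size_f; lia.
  by move/monicP: monic_f; rewrite lead_coefE size_f => ->; rewrite subrr.
rewrite -{1}(subrK f 'X^N) modpD modpp addr0 modp_small //.
by rewrite size_f ltnS.
Qed.

(* [mulL 'X] is the transposed companion matrix of [f]. *)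
Lemma char_poly_mulLX : f \is monic -> char_poly (mulL 'X) = f.
Proof.
move=> monic_f; have e : (size f).-1 = N by rewrite size_f.
rewrite -[in RHS](companionmxK monic_f) -(char_poly_castmx e) -char_poly_tr.
congr char_poly; apply/matrixP => i j; rewrite !mxE castmxE /= mxE /= size_f /= -exprS.
case: eqP => [i_last|ne_i].
  have -> : i.+1 = N by move: i_last; lia.
  rewrite XN_modp // coefB coefXn; case: eqP => [j_N|_]; last by rewrite sub0r.
  by move: (ltn_ord j); rewrite j_N ltnn.
rewrite modp_small; last by rewrite size_polyXn size_f; move: (ltn_ord i) ne_i; lia.
by rewrite coefXn eq_sym.
Qed.

Lemma poly_of_horner_mulLX p x :
  poly_of (horner_mx (mulL 'X) p *m x) = (p * poly_of x) %% f.
Proof.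
elim/poly_ind: p x => [|p c IH] x; first by rewrite rmorph0 mul0mx poly_of0 mul0r mod0p.
rewrite rmorphD rmorphM /= horner_mx_X horner_mx_C -mulmxE mulmxDl -mulmxA.
rewrite mul_scalar_mx poly_ofD poly_ofZ IH poly_of_mulL modp_mul mulrDl modpD.
rewrite -mul_polyC (modp_small (_ : size (c%:P * poly_of x)%R < size f)%N).
  by rewrite mulrA -(mulrA p).
by rewrite mul_polyC size_f ltnS (leq_trans (size_scale_leq _ _)) ?size_poly_of.
Qed.

End QuotientAlgebra.

(** * Operators with a cyclic vector *)

Section Correspondence.
Variables (k : fieldType) (n : nat) (f : {poly k}).
Hypothesis size_f : size f = (n.+1 + n.+1).+1.
Local Notation N := (n.+1 + n.+1)%N.
Local Notation trL := (trL n f).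
Implicit Types (a b l p q : {poly k}) (T : 'M[k]_N) (u v w x : 'cV[k]_N).

Definition krylov_mx T v : 'M[k]_N := \matrix_(i < N, j < N) (horner_mx T 'X^j *m v) i 0.

(* Transporting [<,>] along [L -> U, p |-> p(T) v] gives [<,>_a]. *)
Definition represents T v a :=
  forall p q, bU (horner_mx T p *m v) (horner_mx T q *m v) = trL (a * p * q).

Lemma krylov_mxE T v x : krylov_mx T v *m x = horner_mx T (poly_of x) *m v.
Proof.
apply/colP => i; rewrite /poly_of linear_sum /= mulmx_suml summxE !mxE.
apply: eq_bigr => j _; rewrite !mxE horner_mxZ mulr_suml; apply: eq_bigr => l _.
by rewrite !mxE; ring.
Qed.

Lemma horner_mx_modp T p : char_poly T = f -> horner_mx T (p %% f) = horner_mx T p.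
Proof.
move=> chiT; rewrite {2}(divp_eq p f) rmorphD rmorphM /= -chiT Cayley_Hamilton.
by rewrite mulr0 add0r.
Qed.

Lemma horner_mx_krylov T v p : char_poly T = f ->
  horner_mx T p *m v = krylov_mx T v *m col_poly n (p %% f).
Proof. by move=> chiT; rewrite krylov_mxE col_polyK ?size_modpf // horner_mx_modp. Qed.

Lemma unitmx_krylov T v : mx_annihilator T v f -> krylov_mx T v \in unitmx.
Proof.
move=> cyc_v; apply: unitmx_ker => x; rewrite krylov_mxE => /eqP; rewrite cyc_v => f_x.
apply: poly_of_eq0; apply: contraTeq f_x => nz_x.
by rewrite gtNdvdp // size_f ltnS size_poly_of.
Qed.

Lemma represents_eqmod T v a b : f %| a - b -> represents T v a -> represents T v b.
Proof. by move=> f_ab rep_a p q; rewrite rep_a -!mulrA; apply: trL_eqmodMl. Qed.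

Lemma represents_unique T v a b : represents T v a -> represents T v b -> f %| a - b.
Proof.
move=> rep_a rep_b; apply: (trL_eqmod size_f) => j.
by move: (rep_a 1 'X^j) (rep_b 1 'X^j); rewrite !mulr1 => <- <-.
Qed.

Lemma represents_change T v a l :
  represents T v a -> represents T (horner_mx T l *m v) (a * l ^+ 2).
Proof. by move=> rep_a p q; rewrite -!horner_mxM_mulmx rep_a; congr trL; ring. Qed.

Lemma represents_exists T v : selfadj T -> char_poly T = f -> mx_annihilator T v f ->
  exists a, represents T v a.
Proof.
move=> sa_T chiT cyc_v.
pose a := poly_of (invmx (gramL n f 1) *m \col_(j < N) bU v (horner_mx T 'X^j *m v)).
have a_basis (j : 'I_N) : trL (a * 'X^j) = bU v (horner_mx T 'X^j *m v).
  by rewrite -gramL1_mulmx mulKVmx ?unitmx_gramL1 // mxE.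
have a_all mu : trL (a * mu) = bU v (horner_mx T mu *m v).
  rewrite -trL_modpMr -horner_mx_modp // -[mu %% f](col_polyK (size_modpf size_f mu)).
  rewrite mulrC trL_poly_ofMl /poly_of linear_sum /= mulmx_suml bU_sumr.
  by apply: eq_bigr => i _; rewrite [_ * a]mulrC a_basis horner_mxZ -scalemxAl bUZr.
by exists a => p q; rewrite selfadj_horner_mx // -horner_mxM_mulmx -mulrA a_all.
Qed.

(* A common factor [g] of [a] and [f] makes [(f %/ g)(T) v] orthogonal to everything. *)
Lemma represents_coprime T v a : mx_annihilator T v f -> represents T v a -> coprimep a f.
Proof.
move=> cyc_v rep_a; set g := gcdp a f; set mu := f %/ g.
have Df : f = mu * g by rewrite divpK // dvdp_gcdr.
have nz_mu : mu != 0 by apply: contra_neq (nz_f size_f) => mu0; rewrite Df mu0 mul0r.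
have f_amu : f %| a * mu.
  by rewrite -(divpK (dvdp_gcdl a f)) -/g -mulrA [g * mu]mulrC -Df dvdp_mull.
have mu_v0 : horner_mx T mu *m v = 0.
  apply: bU_nondeg => u; rewrite -[u](mulKVmx (unitmx_krylov cyc_v)) krylov_mxE.
  by rewrite rep_a trL_dvdMl.
have f_mu : f %| mu by rewrite -cyc_v mu_v0.
have := dvdp_leq nz_mu f_mu; rewrite {1}Df size_mul //; last first.
  by rewrite gcdp_eq0 negb_and (nz_f size_f) orbT.
rewrite coprimep_def -/g; have : (0 < size mu)%N by rewrite size_poly_gt0.
have : (0 < size g)%N by rewrite size_poly_gt0 gcdp_eq0 negb_and (nz_f size_f) orbT.
by move: (size g) (size mu) => s t; lia.
Qed.

Lemma represents_split T v a :
  mx_annihilator T v f -> represents T v a -> split_form n f a.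
Proof.
move=> cyc_v rep_a; have Ku := unitmx_krylov cyc_v.
exists (invmx (krylov_mx T v)); split; first by rewrite unitmx_inv.
by move=> u w; rewrite /bL -/(trL _) -rep_a -!krylov_mxE !mulKVmx.
Qed.

(* [w = l(T) v], and [l] is coprime to [f] because [a * l ^+ 2] is. *)
Lemma represents_sqclass T v w a b :
  mx_annihilator T v f -> represents T v a ->
  mx_annihilator T w f -> represents T w b -> sqclass_rel f a b.
Proof.
move=> cyc_v rep_a cyc_w rep_b.
set l := poly_of (invmx (krylov_mx T v) *m w).
have Dw : w = horner_mx T l *m v by rewrite -krylov_mxE mulKVmx // unitmx_krylov.
have rep_al : represents T w (a * l ^+ 2) by rewrite Dw; apply: represents_change.
exists l; split; last by rewrite -opprB dvdpNr (represents_unique rep_al rep_b).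
have := represents_coprime cyc_w rep_al.
by rewrite coprimepMl expr2 coprimepMl => /andP[_ /andP[]].
Qed.

Lemma represents_uconj T g v a : OU g -> represents T v a ->
  represents (g *m T *m invmx g) (g *m v) a.
Proof.
by case=> gu gQ rep_a p q; rewrite !horner_mx_uconj_mul // bU_OU ?rep_a.
Qed.

(* Matching the cyclic bases [p(T) w] and [p(T') v'] is an isometry for the common form
   [<,>_b], and conjugates [T] to [T'] since both act as multiplication by ['X]. *)
Lemma orbit_of_represents T T' w v' b : (2%:R : k) != 0 ->
  char_poly T = f -> char_poly T' = f ->
  mx_annihilator T w f -> represents T w b ->
  mx_annihilator T' v' f -> represents T' v' b -> orbit_rel T T'.
Proof.
move=> two_nz chiT chiT' cyc_w rep_w cyc_v' rep_v'.
set g := krylov_mx T' v' *m invmx (krylov_mx T w).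
have gP p : g *m (horner_mx T p *m w) = horner_mx T' p *m v'.
  by rewrite !horner_mx_krylov // -mulmxA mulKmx // unitmx_krylov.
have Kw_onto u : exists p, u = horner_mx T p *m w.
  by exists (poly_of (invmx (krylov_mx T w) *m u)); rewrite -krylov_mxE mulKVmx ?unitmx_krylov.
have gu : g \in unitmx.
  by rewrite unitmx_mul unitmx_inv (unitmx_krylov cyc_w) (unitmx_krylov cyc_v').
have gT : g *m T = T' *m g.
  apply: mulmx_ext => u; have [p ->] := Kw_onto u.
  have TX : T *m (horner_mx T p *m w) = horner_mx T ('X * p) *m w.
    by rewrite horner_mxM_mulmx horner_mx_X.
  by rewrite -[g *m T *m _]mulmxA -[T' *m g *m _]mulmxA TX !gP horner_mxM_mulmx horner_mx_X.
exists g; split; last by rewrite gT mulmxK.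
split=> // u; apply: (mulfI two_nz); rewrite -!bU_diag.
by have [p ->] := Kw_onto u; rewrite gP rep_w rep_v'.
Qed.

(* [T] is multiplication by [beta] transported along the splitting isometry. *)
Lemma split_represents a : f \is monic -> split_form n f a ->
  exists T v, [/\ Vf n f T, mx_annihilator T v f & represents T v a].
Proof.
move=> monic_f [phi [phi_u phi_iso]].
set C := mulL n f 'X; set T := invmx phi *m C *m phi.
have bL_phi x y : bL f a x y = bU (invmx phi *m x) (invmx phi *m y).
  by rewrite -phi_iso !mulKVmx.
have sa_T : selfadj T.
  move=> u w; rewrite -phi_iso -[bU u _]phi_iso /T !mulmxA mulmxV // !mul1mx -!mulmxA.
  exact: bL_mulL_sym.
have e0 : poly_of (col_poly n (1 : {poly k})) = 1 by rewrite col_polyK // size_poly1.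
have hT p : horner_mx T p *m (invmx phi *m col_poly n (1 : {poly k})) =
    invmx phi *m (horner_mx C p *m col_poly n (1 : {poly k})).
  by rewrite /T horner_mx_uconjC // !mulmxA mulmxK.
exists T, (invmx phi *m col_poly n (1 : {poly k})); split.
- by split=> //; rewrite char_poly_uconj // char_poly_mulLX.
- move=> q; rewrite hT -{1}(mulmx0 _ (invmx phi)) (can_eq (mulKVmx phi_u)).
  apply/eqP/modp_eq0P => [/(congr1 (@poly_of k n))|qf0].
    by rewrite poly_of_horner_mulLX // e0 mulr1 poly_of0.
  by apply: poly_of_eq0; rewrite poly_of_horner_mulLX // e0 mulr1.
- move=> p q; rewrite !hT -bL_phi.
  change (trL (a * poly_of (horner_mx C p *m col_poly n (1 : {poly k}))
    * poly_of (horner_mx C q *m col_poly n (1 : {poly k}))) = trL (a * p * q)).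
  by rewrite !poly_of_horner_mulLX // e0 !mulr1 trL_modpMr mulrAC trL_modpMr mulrAC.
Qed.

End Correspondence.

(** * The invariant *)

Section Invariant.
Variables (k : fieldType) (n : nat) (f : {poly k}).
Hypotheses (size_f : size f = (n.+1 + n.+1).+1) (sep_f : separable_poly f).
Local Notation N := (n.+1 + n.+1)%N.
Implicit Types (T : 'M[k]_N).

Definition alpha_of T : {poly k} :=
  epsilon (inhabits 0) (fun a => exists v, mx_annihilator T v f /\ represents f T v a).

Lemma alpha_ofP T : Vf n f T ->
  exists v, mx_annihilator T v f /\ represents f T v (alpha_of T).
Proof.
case=> sa_T chiT; apply: (epsilon_spec (inhabits 0)
  (fun a => exists v, mx_annihilator T v f /\ represents f T v a)).
have [|v cyc_v] := mx_annihilator_dvd _ (dvdpp (char_poly T)); first by rewrite chiT.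
rewrite chiT in cyc_v; have [a rep_a] := represents_exists size_f sa_T chiT cyc_v.
by exists a, v.
Qed.

Lemma orbit_alpha_of T T' : Vf n f T -> Vf n f T' ->
  orbit_rel T T' -> sqclass_rel f (alpha_of T) (alpha_of T').
Proof.
move=> VT VT' [g [g_OU DT']]; subst T'.
have [v [cyc_v rep_v]] := alpha_ofP VT; have [v' [cyc_v' rep_v']] := alpha_ofP VT'.
have cyc_gv : mx_annihilator (g *m T *m invmx g) (g *m v) f.
  by case: g_OU => gu _; apply: mx_annihilator_uconj.
exact (represents_sqclass size_f cyc_gv (represents_uconj g_OU rep_v) cyc_v' rep_v').
Qed.

Lemma alpha_of_orbit T T' : (2%:R : k) != 0 -> Vf n f T -> Vf n f T' ->
  sqclass_rel f (alpha_of T) (alpha_of T') -> orbit_rel T T'.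
Proof.
move=> two_nz VT VT' [l [cop_l f_l]].
have [v [cyc_v rep_v]] := alpha_ofP VT; have [v' [cyc_v' rep_v']] := alpha_ofP VT'.
case: VT VT' => _ chiT [_ chiT'].
have cyc_w : mx_annihilator T (horner_mx T l *m v) f.
  by move=> q; rewrite -horner_mxM_mulmx cyc_v Gauss_dvdpl // coprimep_sym.
have rep_w : represents f T (horner_mx T l *m v) (alpha_of T').
  by apply: represents_eqmod (represents_change l rep_v); rewrite -opprB dvdpNr.
exact (orbit_of_represents size_f two_nz chiT chiT' cyc_w rep_w cyc_v' rep_v').
Qed.

Lemma alpha_of_onto a : f \is monic -> split_form n f a ->
  exists T, Vf n f T /\ sqclass_rel f (alpha_of T) a.
Proof.
move=> monic_f split_a; have [T [w [VT cyc_w rep_w]]] := split_represents size_f monic_f split_a.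
have [v [cyc_v rep_v]] := alpha_ofP VT.
by exists T; split; last exact (represents_sqclass size_f cyc_v rep_v cyc_w rep_w).
Qed.

End Invariant.

Theorem theorem2p5 (k : fieldType) (n : nat) (f : {poly k}) :
  (2%:R : k) != 0 -> f \is monic -> size f = (n.+1 + n.+1).+1 -> separable_poly f ->
  exists Phi : 'M[k]_(n.+1 + n.+1) -> {poly k},
    [/\ forall T, Vf n f T ->
          [/\ coprimep (Phi T) f, norm_sq n f (Phi T) & split_form n f (Phi T)],
        forall T T', Vf n f T -> Vf n f T' ->
          (orbit_rel T T' <-> sqclass_rel f (Phi T) (Phi T')) &
        forall a : {poly k}, coprimep a f -> norm_sq n f a -> split_form n f a ->
          exists T, Vf n f T /\ sqclass_rel f (Phi T) a].
Proof.
move=> two_nz monic_f size_f sep_f; exists (alpha_of f); split.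
- move=> T VT; have [v [cyc_v rep_v]] := alpha_ofP size_f sep_f VT.
  have split_v := represents_split size_f cyc_v rep_v.
  split=> //; last exact: split_form_norm_sq.
  exact (represents_coprime size_f cyc_v rep_v).
- move=> T T' VT VT'; split; first exact: orbit_alpha_of.
  exact: alpha_of_orbit.
- by move=> a _ _; apply: alpha_of_onto.
Qed.
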